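(* Consider difference logic. Let $G$ be a finite set of difference-logic predicates and let $m$ be the number of variables occurring in $G$. Then $D_T(G) \le \log_2 m$; that is, for every subset $G'\subseteq G$ and every integer $N \ge \log_2 m$, the saturation procedure $\mathrm{Sat}_N(G')$ returns UNSATISFIABLE if and only if $G'$ is unsatisfiable over the reals.
   Context: Difference-logic predicates have the form $x \bowtie y + c$ where $x,y$ are real-valued variables, $\bowtie\in\{<,\le\}$ and $c$ is a real constant. The inference rules are: (a) from $X \le Z + C$ and $Z \bowtie Y + D$ derive $X \bowtie Y + (C+D)$; (b) from $X < Z + C$ and $Z \bowtie Y + D$ derive $X < Y + (C+D)$; (c) from $X < Y + C$ and $Y \bowtie X + D$ with $C+D \le 0$ derive $\bot$; (d) from $X \le Y + C$ and $Y \le X + D$ with $C + D < 0$ derive $\bot$; (e) from $X \le Y$ and $Y \le X$ derive $X = Y$. Saturation procedure $\mathrm{Sat}_N(H)$: (1) $W := H$. (2) Repeat $N$ times: $W' := W$; for every predicate $g\notin W'$ derivable in one rule application from predicates all in $W'$, add $g$ to $W$. (3) Return UNSATISFIABLE if $\bot$ is derivable in one rule application from predicates in $W$, else SATISFIABLE. $D_T(G)$ denotes the maximum over $G'\subseteq G$ of the least number $d$ such that $\mathrm{Sat}_N(G')$ correctly decides satisfiability of $G'$ for all $N\ge d$. *)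

From Stdlib Require Import Reals List Arith.
Import ListNotations.
Open Scope R_scope.

(* Variables are natural numbers.
   [DL s x y c] is the difference-logic predicate  x < y + c  (s = true)
   or  x <= y + c  (s = false).  [DLeq x y] is the equality  x = y,
   which can only arise from rule (e). *)
Inductive dl_pred : Type :=
  | DL (strict : bool) (x y : nat) (c : R)
  | DLeq (x y : nat).

Definition is_diff (p : dl_pred) : Prop :=
  match p with DL _ _ _ _ => True | DLeq _ _ => False end.

Definition holds (v : nat -> R) (p : dl_pred) : Prop :=
  match p with
  | DL true x y c => v x < v y + c
  | DL false x y c => v x <= v y + c
  | DLeq x y => v x = v y
  end.

Definition satisfiable (H : dl_pred -> Prop) : Prop :=
  exists v : nat -> R, forall p, H p -> holds v p.

Inductive derives (W : dl_pred -> Prop) : dl_pred -> Prop :=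
  | rule_a : forall x z y c d s,
      W (DL false x z c) -> W (DL s z y d) -> derives W (DL s x y (c + d))
  | rule_b : forall x z y c d s,
      W (DL true x z c) -> W (DL s z y d) -> derives W (DL true x y (c + d))
  | rule_e : forall x y,
      W (DL false x y 0) -> W (DL false y x 0) -> derives W (DLeq x y).

Inductive derives_bot (W : dl_pred -> Prop) : Prop :=
  | rule_c : forall x y c d s,
      W (DL true x y c) -> W (DL s y x d) -> c + d <= 0 -> derives_bot W
  | rule_d : forall x y c d,
      W (DL false x y c) -> W (DL false y x d) -> c + d < 0 -> derives_bot W.

Fixpoint sat_W (N : nat) (H : dl_pred -> Prop) : dl_pred -> Prop :=
  match N with
  | O => H
  | S n => fun g => sat_W n H g \/ derives (sat_W n H) g
  end.

Definition Sat_unsat (N : nat) (H : dl_pred -> Prop) : Prop :=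
  derives_bot (sat_W N H).

Definition pred_vars (p : dl_pred) : list nat :=
  match p with DL _ x y _ => [x; y] | DLeq x y => [x; y] end.

Definition num_vars (G : list dl_pred) : nat :=
  length (nodup Nat.eq_dec (flat_map pred_vars G)).

(* Every rule is valid over the reals, so UNSATISFIABLE is always correct.
   Conversely, read each constraint [x ⋈ y + c] as an edge [x -> y] of weight [c].
   Eliminating the variables one at a time (Fourier-Motzkin) shows that the
   constraints are satisfiable unless the graph has a negative cycle: total weight
   [< 0], or [<= 0] with a strict edge.  Cutting at repeated vertices shortens it to
   a simple negative cycle, of length at most [m].  Round [k] of the saturation
   composes two walks of length at most [2 ^ (k-1)], hence derives every walk of
   length at most [2 ^ k]; after [log2 m] rounds the cycle is a derived loop
   [x ⋈ x + c], which rule (c) or (d) refutes against itself. *)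

From Stdlib Require Import Reals List Lra Lia Classical Bool Arith.
Import ListNotations.
Open Scope R_scope.

Record edge := Edge { estrict : bool; esrc : nat; edst : nat; eweight : R }.

Definition pred_of_edge (e : edge) : dl_pred :=
  DL (estrict e) (esrc e) (edst e) (eweight e).

Definition feasible (v : nat -> R) (L : list edge) : Prop :=
  forall e, In e L -> holds v (pred_of_edge e).

Fixpoint walk (x : nat) (l : list edge) (y : nat) : Prop :=
  match l with [] => x = y | e :: l' => esrc e = x /\ walk (edst e) l' y end.

Fixpoint walk_weight (l : list edge) : R :=
  match l with [] => 0 | e :: l' => eweight e + walk_weight l' end.

Fixpoint walk_strict (l : list edge) : bool :=
  match l with [] => false | e :: l' => estrict e || walk_strict l' end.

(* The loop [x < x + c] (if [s]) or [x <= x + c] is unsatisfiable. *)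
Definition neg_bound (c : R) (s : bool) : Prop := c < 0 \/ (c <= 0 /\ s = true).

Definition neg_cycle (L : list edge) (x : nat) (l : list edge) : Prop :=
  walk x l x /\ l <> [] /\ incl l L /\ neg_bound (walk_weight l) (walk_strict l).

Lemma walk_app l1 l2 x y :
  walk x (l1 ++ l2) y <-> exists z, walk x l1 z /\ walk z l2 y.
Proof.
  revert x; induction l1 as [|e l1 IH]; intros x; simpl.
  - split; [intros H; exists x; auto | intros [z [-> H]]; auto].
  - rewrite IH; split.
    + intros [Hx [z [H1 H2]]]; exists z; auto.
    + intros [z [[Hx H1] H2]]; split; [auto | exists z; auto].
Qed.

Lemma walk_weight_app l1 l2 : walk_weight (l1 ++ l2) = walk_weight l1 + walk_weight l2.
Proof. induction l1 as [|e l1 IH]; simpl; [lra | rewrite IH; lra]. Qed.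

Lemma walk_strict_app l1 l2 : walk_strict (l1 ++ l2) = walk_strict l1 || walk_strict l2.
Proof. induction l1 as [|e l1 IH]; simpl; [reflexivity | now rewrite IH, orb_assoc]. Qed.

Lemma neg_bound_split c1 c2 s1 s2 :
  neg_bound (c1 + c2) (s1 || s2) -> neg_bound c1 s1 \/ neg_bound c2 s2.
Proof.
  unfold neg_bound; intros H.
  destruct (Rlt_le_dec c1 0), (Rlt_le_dec c2 0); auto.
  destruct H as [H | [H Hs]]; [lra|].
  apply orb_true_iff in Hs as [-> | ->]; [left | right]; right; split; auto; lra.
Qed.

Lemma holds_loop v e :
  esrc e = edst e -> ~ neg_bound (eweight e) (estrict e) -> holds v (pred_of_edge e).
Proof.
  unfold neg_bound, pred_of_edge; intros Hloop Hnn; simpl; rewrite Hloop.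
  destruct (estrict e).
  - destruct (Rle_lt_dec (eweight e) 0); [exfalso; apply Hnn; right; auto | lra].
  - destruct (Rlt_le_dec (eweight e) 0); [exfalso; apply Hnn; left; auto | lra].
Qed.

Definition lower_ok (t : R) (p : R * bool) : Prop :=
  if snd p then fst p < t else fst p <= t.

Definition upper_ok (t : R) (q : R * bool) : Prop :=
  if snd q then t < fst q else t <= fst q.

Definition bounds_compatible (p q : R * bool) : Prop :=
  if snd p || snd q then fst p < fst q else fst p <= fst q.

Lemma exists_lt_all (us : list R) : exists a, forall u, In u us -> a < u.
Proof.
  induction us as [|u us [a Ha]].
  - exists 0; intros u [].
  - exists (Rmin a (u - 1)); intros u' [<- | Hu'].
    + pose proof (Rmin_r a (u - 1)); lra.
    + pose proof (Rmin_l a (u - 1)); specialize (Ha _ Hu'); lra.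
Qed.

Lemma exists_between_all (a : R) (us : list R) :
  (forall u, In u us -> a < u) -> exists t, a < t /\ forall u, In u us -> t < u.
Proof.
  induction us as [|u us IH]; intros Hlt.
  - exists (a + 1); split; [lra | intros u []].
  - destruct IH as [t [Hat Ht]]; [intros; apply Hlt; right; auto|].
    assert (Hau : a < u) by (apply Hlt; left; auto).
    exists (Rmin t ((a + u) / 2)); split; [apply Rmin_glb_lt; lra|].
    intros u' [<- | Hu'].
    + pose proof (Rmin_r t ((a + u) / 2)); lra.
    + pose proof (Rmin_l t ((a + u) / 2)); specialize (Ht _ Hu'); lra.
Qed.

Lemma lower_ok_total p q :
  (forall t, lower_ok t p -> lower_ok t q) \/ (forall t, lower_ok t q -> lower_ok t p).
Proof.
  destruct p as [a s], q as [b s']; unfold lower_ok; simpl.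
  destruct (Rtotal_order a b) as [H | [<- | H]].
  - right; intros t; destruct s, s'; lra.
  - destruct s; [left | right]; intros t; destruct s'; lra.
  - left; intros t; destruct s, s'; lra.
Qed.

Lemma exists_strongest_lower (Lo : list (R * bool)) :
  Lo <> [] -> exists p, In p Lo /\
    forall p' t, In p' Lo -> lower_ok t p -> lower_ok t p'.
Proof.
  induction Lo as [|p0 Lo IH]; intros Hne; [congruence|].
  destruct Lo as [|p1 Lo].
  - exists p0; split; [left; auto|]; intros p' t [<- | []]; auto.
  - destruct IH as [p [Hp Hstrong]]; [congruence|].
    destruct (lower_ok_total p0 p) as [H | H].
    + exists p0; split; [left; auto|]; intros p' t [<- | Hp'] Ht; auto.
    + exists p; split; [right; auto|]; intros p' t [<- | Hp'] Ht; auto.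
Qed.

Lemma exists_between_bounds (Lo Up : list (R * bool)) :
  (forall p q, In p Lo -> In q Up -> bounds_compatible p q) ->
  exists t, (forall p, In p Lo -> lower_ok t p) /\ (forall q, In q Up -> upper_ok t q).
Proof.
  intros Hcomp.
  destruct Lo as [|p0 Lo].
  - destruct (exists_lt_all (map fst Up)) as [a Ha].
    exists a; split; [intros p []|].
    intros [u s] Hq; specialize (Ha u (in_map fst _ _ Hq)); unfold upper_ok; simpl in *.
    destruct s; lra.
  - destruct (exists_strongest_lower (p0 :: Lo)) as [[l s] [Hp Hstrong]]; [congruence|].
    destruct s.
    + destruct (exists_between_all l (map fst Up)) as [t [Hlt Ht]].
      { intros u Hu; apply in_map_iff in Hu as [q [<- Hq]].
        exact (Hcomp _ _ Hp Hq). }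
      exists t; split.
      * intros p' Hp'; apply (Hstrong p' t Hp'); exact Hlt.
      * intros [u s'] Hq; specialize (Ht u (in_map fst _ _ Hq)); unfold upper_ok; simpl in *.
        destruct s'; lra.
    + exists l; split.
      * intros p' Hp'; apply (Hstrong p' l Hp'); unfold lower_ok; simpl; lra.
      * intros [u s'] Hq; specialize (Hcomp _ _ Hp Hq); unfold bounds_compatible, upper_ok in *.
        simpl in *; destruct s'; simpl in *; lra.
Qed.
Definition compose (e1 e2 : edge) : edge :=
  Edge (estrict e1 || estrict e2) (esrc e1) (edst e2) (eweight e1 + eweight e2).

Section Elimination.

Variables (z : nat) (L : list edge).

Definition edges_into_z : list edge :=
  filter (fun e => (edst e =? z) && negb (esrc e =? z)) L.

Definition edges_out_of_z : list edge :=
  filter (fun e => (esrc e =? z) && negb (edst e =? z)) L.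

Definition edges_avoiding_z : list edge :=
  filter (fun e => negb (esrc e =? z) && negb (edst e =? z)) L.

Definition eliminate : list edge :=
  edges_avoiding_z ++ flat_map (fun e1 => map (compose e1) edges_out_of_z) edges_into_z.

Lemma in_eliminate e : In e eliminate ->
  (In e L /\ esrc e <> z /\ edst e <> z) \/
  exists e1 e2, In e1 L /\ In e2 L /\ edst e1 = z /\ esrc e2 = z /\
    esrc e1 <> z /\ edst e2 <> z /\ e = compose e1 e2.
Proof.
  unfold eliminate, edges_avoiding_z, edges_into_z, edges_out_of_z.
  intros He; apply in_app_iff in He as [He | He].
  - left; apply filter_In in He as [He Hb].
    apply andb_true_iff in Hb as [H1 H2].
    apply negb_true_iff, Nat.eqb_neq in H1, H2; auto.
  - right; apply in_flat_map in He as [e1 [He1 He]].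
    apply in_map_iff in He as [e2 [<- He2]].
    apply filter_In in He1 as [He1 Hb1], He2 as [He2 Hb2].
    apply andb_true_iff in Hb1 as [H1 H2], Hb2 as [H3 H4].
    apply Nat.eqb_eq in H1, H3; apply negb_true_iff, Nat.eqb_neq in H2, H4.
    exists e1, e2; repeat split; auto.
Qed.

Lemma eliminate_vertices (V : list nat) :
  (forall e, In e L -> In (esrc e) (z :: V) /\ In (edst e) (z :: V)) ->
  forall e, In e eliminate -> In (esrc e) V /\ In (edst e) V.
Proof.
  intros HV e He.
  destruct (in_eliminate e He) as [[HeL [H1 H2]] | (e1 & e2 & He1 & He2 & _ & _ & H1 & H2 & ->)].
  - destruct (HV e HeL) as [[? | ?] [? | ?]]; try congruence; auto.
  - destruct (HV e1 He1) as [[? | ?] _], (HV e2 He2) as [_ [? | ?]]; simpl; try congruence; auto.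
Qed.

Lemma eliminate_walk l' x y : walk x l' y -> incl l' eliminate ->
  exists l, walk x l y /\ incl l L /\ walk_weight l = walk_weight l' /\
    walk_strict l = walk_strict l' /\ (l' <> [] -> l <> []).
Proof.
  revert x; induction l' as [|e l' IH]; intros x Hw Hi.
  - exists []; simpl; repeat split; auto; intros a [].
  - destruct Hw as [Hx Hw].
    destruct (IH _ Hw (fun a Ha => Hi a (or_intror Ha))) as (l & Hl & Hli & Hlw & Hls & _).
    destruct (in_eliminate e (Hi e (or_introl eq_refl)))
      as [[HeL _] | (e1 & e2 & He1 & He2 & Hz1 & Hz2 & _ & _ & ->)].
    + exists (e :: l); simpl; repeat split; auto; try congruence.
      intros a [<- | Ha]; auto.
    + exists (e1 :: e2 :: l); simpl in *; repeat split; auto; try congruence.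
      * intros a [<- | [<- | Ha]]; auto.
      * rewrite Hlw; lra.
      * rewrite Hls, orb_assoc; auto.
Qed.

Lemma eliminate_neg_cycle x l' : neg_cycle eliminate x l' -> exists l, neg_cycle L x l.
Proof.
  intros (Hw & Hne & Hi & Hneg).
  destruct (eliminate_walk l' x x Hw Hi) as (l & Hl & Hli & Hlw & Hls & Hlne).
  exists l; repeat split; auto.
  rewrite Hlw, Hls; exact Hneg.
Qed.

(* The value of [z] must lie above [v' x - c] for each edge [x -> z] and below
   [v' y + c] for each edge [z -> y]; the composed edges [x -> y] of [eliminate]
   are exactly the compatibility conditions between these bounds. *)
Lemma eliminate_feasible_extend v' :
  (forall l, ~ neg_cycle L z l) -> feasible v' eliminate ->
  exists t, feasible (fun n => if n =? z then t else v' n) L.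
Proof.
  intros Hnoloop Hv'.
  set (lower e := (v' (esrc e) - eweight e, estrict e)).
  set (upper e := (v' (edst e) + eweight e, estrict e)).
  destruct (exists_between_bounds (map lower edges_into_z) (map upper edges_out_of_z))
    as [t [Hlo Hup]].
  { intros p q Hp Hq.
    apply in_map_iff in Hp as [e1 [<- He1]], Hq as [e2 [<- He2]].
    assert (Hin : In (compose e1 e2) eliminate).
    { apply in_app_iff; right; apply in_flat_map; exists e1; split; auto.
      apply in_map; auto. }
    specialize (Hv' _ Hin); unfold bounds_compatible, lower, upper, pred_of_edge in *.
    simpl in *; destruct (estrict e1 || estrict e2); lra. }
  exists t; intros e He; unfold pred_of_edge; simpl.
  destruct (esrc e =? z) eqn:Hs, (edst e =? z) eqn:Hd.
  - apply Nat.eqb_eq in Hs, Hd.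
    assert (Hnn : ~ neg_bound (eweight e) (estrict e)).
    { intros Hneg; apply (Hnoloop [e]); repeat split; simpl; try congruence.
      - intros a [<- | []]; auto.
      - rewrite Rplus_0_r, orb_false_r; exact Hneg. }
    pose proof (holds_loop (fun _ => t) e ltac:(congruence) Hnn) as H.
    unfold pred_of_edge in H; exact H.
  - assert (Hin : In (upper e) (map upper edges_out_of_z)).
    { apply in_map, filter_In; rewrite Hs, Hd; auto. }
    specialize (Hup _ Hin); unfold upper_ok, upper in Hup; simpl in Hup.
    destruct (estrict e); exact Hup.
  - assert (Hin : In (lower e) (map lower edges_into_z)).
    { apply in_map, filter_In; rewrite Hs, Hd; auto. }
    specialize (Hlo _ Hin); unfold lower_ok, lower in Hlo; simpl in Hlo.
    destruct (estrict e); lra.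
  - assert (Hin : In e eliminate).
    { apply in_app_iff; left; apply filter_In; rewrite Hs, Hd; auto. }
    exact (Hv' e Hin).
Qed.

End Elimination.

Lemma feasible_of_no_neg_cycle (V : list nat) (L : list edge) :
  (forall e, In e L -> In (esrc e) V /\ In (edst e) V) ->
  (forall x l, ~ neg_cycle L x l) -> exists v, feasible v L.
Proof.
  revert L; induction V as [|z V IH]; intros L HV Hno.
  - exists (fun _ => 0); intros e He; destruct (HV e He) as [[] _].
  - destruct (IH (eliminate z L)) as [v' Hv'].
    + exact (eliminate_vertices z L V HV).
    + intros x l' Hcyc.
      destruct (eliminate_neg_cycle z L x l' Hcyc) as [l Hl]; exact (Hno x l Hl).
    + destruct (eliminate_feasible_extend z L v' (Hno z) Hv') as [t Ht].
      eexists; exact Ht.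
Qed.

Lemma split_at_repeated_src (l : list edge) : ~ NoDup (map esrc l) ->
  exists l1 e1 l2 e2 l3, l = l1 ++ e1 :: l2 ++ e2 :: l3 /\ esrc e1 = esrc e2.
Proof.
  induction l as [|e l IH]; intros Hdup; simpl in Hdup.
  - exfalso; apply Hdup; constructor.
  - destruct (classic (In (esrc e) (map esrc l))) as [Hin | Hnin].
    + apply in_map_iff in Hin as [e2 [He2 Hin]]; apply in_split in Hin as [l2 [l3 ->]].
      exists [], e, l2, e2, l3; auto.
    + destruct IH as (l1 & e1 & l2 & e2 & l3 & -> & Heq).
      { intros Hnd; apply Hdup; constructor; auto. }
      exists (e :: l1), e1, l2, e2, l3; auto.
Qed.

(* The two closed walks share out the edges of the cycle, so their weights add up
   and one of them is still negative. *)
Lemma neg_cycle_split L x l1 e1 l2 e2 l3 :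
  esrc e1 = esrc e2 -> neg_cycle L x (l1 ++ e1 :: l2 ++ e2 :: l3) ->
  neg_cycle L (esrc e1) (e1 :: l2) \/ neg_cycle L x (l1 ++ e2 :: l3).
Proof.
  intros Hrep (Hw & _ & Hi & Hneg).
  apply walk_app in Hw as [a [Hw1 [Ha Hw2]]].
  apply walk_app in Hw2 as [b [Hw2 [Hb Hw3]]].
  assert (Hi' : forall y, In y (e1 :: l2) \/ In y (l1 ++ e2 :: l3) -> In y L).
  { intros y Hy; apply Hi; rewrite !in_app_iff in *; simpl in *; rewrite in_app_iff; simpl; tauto. }
  rewrite walk_weight_app, walk_strict_app in Hneg; simpl in Hneg.
  rewrite walk_weight_app, walk_strict_app in Hneg; simpl in Hneg.
  replace (walk_weight l1 + (eweight e1 + (walk_weight l2 + (eweight e2 + walk_weight l3))))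
    with ((eweight e1 + walk_weight l2) + (walk_weight l1 + (eweight e2 + walk_weight l3)))
    in Hneg by ring.
  replace (walk_strict l1 || (estrict e1 || (walk_strict l2 || (estrict e2 || walk_strict l3))))
    with ((estrict e1 || walk_strict l2) || (walk_strict l1 || (estrict e2 || walk_strict l3)))
    in Hneg by (destruct (walk_strict l1), (estrict e1), (walk_strict l2); reflexivity).
  destruct (neg_bound_split _ _ _ _ Hneg) as [Hneg1 | Hneg2]; [left | right].
  - repeat split; simpl; auto; try congruence.
    intros y Hy; apply Hi'; auto.
  - repeat split.
    + apply walk_app; exists a; simpl; split; [|split]; auto; congruence.
    + destruct l1; discriminate.
    + intros y Hy; apply Hi'; auto.
    + rewrite walk_weight_app, walk_strict_app; exact Hneg2.
Qed.

Lemma neg_cycle_simple L x l : neg_cycle L x l ->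
  exists x' l', neg_cycle L x' l' /\ NoDup (map esrc l').
Proof.
  remember (length l) as n eqn:Hn; revert x l Hn.
  induction n as [n IH] using lt_wf_ind; intros x l Hn Hcyc.
  destruct (classic (NoDup (map esrc l))) as [Hnd | Hdup]; [exists x, l; auto|].
  destruct (split_at_repeated_src l Hdup) as (l1 & e1 & l2 & e2 & l3 & -> & Hrep).
  rewrite !length_app in Hn; simpl in Hn; rewrite length_app in Hn; simpl in Hn.
  destruct (neg_cycle_split L x l1 e1 l2 e2 l3 Hrep Hcyc) as [Hc | Hc].
  - apply (IH (length (e1 :: l2))) with (esrc e1) (e1 :: l2); simpl; auto; lia.
  - apply (IH (length (l1 ++ e2 :: l3))) with x (l1 ++ e2 :: l3); auto.
    rewrite length_app; simpl; lia.
Qed.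

Lemma simple_cycle_length (V : list nat) (l : list edge) :
  NoDup (map esrc l) -> (forall e, In e l -> In (esrc e) V) ->
  (length l <= length (nodup Nat.eq_dec V))%nat.
Proof.
  intros Hnd HV; rewrite <- (length_map esrc l).
  apply NoDup_incl_length; auto.
  intros a Ha; apply nodup_In; apply in_map_iff in Ha as [e [<- He]]; auto.
Qed.

Lemma sat_W_incl n (H : dl_pred -> Prop) p : H p -> sat_W n H p.
Proof. induction n; simpl; auto. Qed.

Lemma sat_W_sound n (H : dl_pred -> Prop) v :
  (forall p, H p -> holds v p) -> forall p, sat_W n H p -> holds v p.
Proof.
  intros Hv; induction n as [|n IH]; intros p Hp; simpl in Hp; auto.
  destruct Hp as [Hp | Hp]; auto.
  destruct Hp as [x z y c d s H1 H2 | x z y c d s H1 H2 | x y H1 H2];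
    apply IH in H1, H2; simpl in *; try destruct s; lra.
Qed.

Lemma Sat_unsat_sound N (H : dl_pred -> Prop) : Sat_unsat N H -> ~ satisfiable H.
Proof.
  intros Hbot [v Hv].
  destruct Hbot as [x y c d s H1 H2 Hcd | x y c d H1 H2 Hcd];
    apply (sat_W_sound N H v Hv) in H1, H2; simpl in *; try destruct s; lra.
Qed.

Lemma sat_W_walk (H : dl_pred -> Prop) (L : list edge) :
  (forall e, In e L -> H (pred_of_edge e)) ->
  forall n l x y, walk x l y -> incl l L -> l <> [] -> (length l <= 2 ^ n)%nat ->
  sat_W n H (DL (walk_strict l) x y (walk_weight l)).
Proof.
  intros HL; induction n as [|n IH]; intros l x y Hw Hi Hne Hlen.
  - destruct l as [|e [|e' l]]; simpl in Hlen; try congruence; try lia.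
    destruct Hw as [<- <-]; simpl; rewrite orb_false_r, Rplus_0_r.
    apply HL, Hi; left; auto.
  - destruct (le_lt_dec (length l) (2 ^ n)) as [Hl | Hl]; [simpl; left; auto|].
    pose proof (Nat.pow_nonzero 2 n ltac:(lia)).
    rewrite <- (firstn_skipn (2 ^ n) l) in Hw, Hi |- *.
    assert (H1 : length (firstn (2 ^ n) l) = (2 ^ n)%nat) by (apply firstn_length_le; lia).
    assert (H2 : length (skipn (2 ^ n) l) = (length l - 2 ^ n)%nat) by apply length_skipn.
    set (l1 := firstn (2 ^ n) l) in *; set (l2 := skipn (2 ^ n) l) in *.
    simpl in Hlen; apply walk_app in Hw as [z [Hw1 Hw2]].
    assert (Hne1 : l1 <> []) by (intros E; rewrite E in H1; simpl in H1; lia).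
    assert (Hne2 : l2 <> []) by (intros E; rewrite E in H2; simpl in H2; lia).
    assert (S1 := IH l1 x z Hw1 (fun a Ha => Hi a (in_or_app _ _ _ (or_introl Ha))) Hne1
                     ltac:(lia)).
    assert (S2 := IH l2 z y Hw2 (fun a Ha => Hi a (in_or_app _ _ _ (or_intror Ha))) Hne2
                     ltac:(lia)).
    rewrite walk_weight_app, walk_strict_app; simpl; right.
    destruct (walk_strict l1); simpl; [eapply rule_b | eapply rule_a]; eauto.
Qed.

Lemma derives_bot_loop (W : dl_pred -> Prop) s x c :
  W (DL s x x c) -> neg_bound c s -> derives_bot W.
Proof.
  intros Hloop [Hc | [Hc ->]].
  - destruct s; [eapply rule_c | eapply rule_d]; eauto; lra.
  - eapply rule_c; eauto; lra.
Qed.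

Lemma le_pow2_of_log2_le m N : ln (INR m) / ln 2 <= INR N -> (m <= 2 ^ N)%nat.
Proof.
  intros Hlog; destruct (le_lt_dec m (2 ^ N)) as [Hle | Hlt]; auto; exfalso.
  apply lt_INR in Hlt; rewrite pow_INR in Hlt; simpl in Hlt.
  assert (Hpow : 0 < 2 ^ N) by (apply pow_lt; lra).
  assert (Hln2 : 0 < ln 2) by (rewrite <- ln_1; apply ln_increasing; lra).
  pose proof (ln_increasing _ _ Hpow Hlt) as Hln; rewrite ln_pow in Hln by lra.
  apply (Rmult_le_compat_r (ln 2)) in Hlog; [|lra].
  unfold Rdiv in Hlog; rewrite Rmult_assoc, Rinv_l, Rmult_1_r in Hlog; lra.
Qed.

Lemma exists_edge_list (G : list dl_pred) (P : dl_pred -> Prop) :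
  exists L, forall e, In e L <-> In (pred_of_edge e) G /\ P (pred_of_edge e).
Proof.
  induction G as [|p G [L HL]].
  - exists []; simpl; tauto.
  - destruct (classic (exists e, p = pred_of_edge e /\ P p)) as [[e [-> HP]] | Hno].
    + exists (e :: L); intros e'; simpl; rewrite HL; split.
      * intros [<- | H]; tauto.
      * intros [[Heq | H] HP']; [left | right; tauto].
        destruct e, e'; unfold pred_of_edge in Heq; simpl in Heq; congruence.
    + exists L; intros e'; simpl; rewrite HL; split; [tauto|].
      intros [[Heq | H] HP']; [|tauto].
      exfalso; apply Hno; exists e'; rewrite Heq; auto.
Qed.

Theorem proposition3p11 :
  forall G : list dl_pred,
    (forall p, In p G -> is_diff p) ->
    forall (G' : dl_pred -> Prop), (forall p, G' p -> In p G) ->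
    forall N : nat, ln (INR (num_vars G)) / ln 2 <= INR N ->
      (Sat_unsat N G' <-> ~ satisfiable G').
Proof.
  intros G Hdiff G' HG' N HN; split; [apply Sat_unsat_sound | intros Hunsat].
  destruct (exists_edge_list G G') as [L HL].
  set (V := flat_map pred_vars G).
  assert (HV : forall e, In e L -> In (esrc e) V /\ In (edst e) V).
  { intros e He; apply HL in He as [He _]; unfold V; rewrite !in_flat_map.
    split; exists (pred_of_edge e); simpl; auto. }
  assert (Hcyc : exists x l, neg_cycle L x l).
  { apply NNPP; intros Hno.
    destruct (feasible_of_no_neg_cycle V L HV) as [v Hv]; [firstorder|].
    apply Hunsat; exists v; intros [s x y c | x y] Hp; [| destruct (Hdiff _ (HG' _ Hp))].
    apply (Hv (Edge s x y c)), HL; auto. }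
  destruct Hcyc as (x0 & l0 & Hcyc0).
  destruct (neg_cycle_simple L x0 l0 Hcyc0) as (x & l & (Hw & Hne & Hi & Hneg) & Hnd).
  assert (Hlen : (length l <= 2 ^ N)%nat).
  { apply Nat.le_trans with (num_vars G); [|exact (le_pow2_of_log2_le _ _ HN)].
    apply simple_cycle_length; auto; intros e He; apply HV, Hi, He. }
  apply (derives_bot_loop _ (walk_strict l) x (walk_weight l)); auto.
  apply (sat_W_walk G' L); auto.
  intros e He; apply HL, He.
Qed.
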